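(* Suppose $\alpha_k\in(0,1]$, $k\ge1$, used in procedure $\mathcal{G}_{APL}$ satisfy $\alpha_1=1$ and $\gamma_k(1)\|\Gamma_k(1,\rho)\|_{\frac{2}{1-\rho}}\le ck^{-\frac{1+3\rho}{2}}$ for all $k\ge1$, for some $c>0$. Let $\epsilon>0$, $\beta,\theta\in(0,1)$, $q=1-(1-\theta)\min\{\beta,1-\beta\}$. Then for the APL method: (a) the number of phases does not exceed $\bar S(\epsilon):=\left\lceil\max\left\{0,\log_{1/q}\frac{M\Omega_{\omega,X}^{(1+\rho)/2}}{(1+\rho)\epsilon}\right\}\right\rceil$; (b) the total number of iterations is at most $$\bar S(\epsilon)+\frac{1}{1-q^{\frac{2}{1+3\rho}}}\left(\frac{cM\Omega_{\omega,X}^{\frac{1+\rho}{2}}}{\beta\theta(1+\rho)\epsilon}\right)^{\frac{2}{1+3\rho}}.$$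
   Context: Problem: $f^*=\min_{x\in X}f(x)$, $X\subseteq\mathbb{R}^n$ nonempty convex compact, arbitrary norm $\|\cdot\|$ on $\mathbb{R}^n$; $f:X\to\mathbb{R}$ convex with oracle returning $f(x)$, $f'(x)\in\partial f(x)$ such that for some $M>0$, $\rho\in[0,1]$: $f(y)-f(x)-\langle f'(x),y-x\rangle\le\frac{M}{1+\rho}\|y-x\|^{1+\rho}$ on $X$. $h(z,x):=f(z)+\langle f'(z),x-z\rangle$; $\mathcal{L}_f(l):=\{x\in X:f(x)\le l\}$; a localizer is a convex compact $X'$ with $\mathcal{L}_f(l)\subseteq X'\subseteq X$. $\omega$: differentiable, strongly convex with modulus $\sigma_\omega$ on $X$; $\mathcal{D}^2_{\omega,X}:=\max_{x,z\in X}\{\omega(x)-\omega(z)-\langle\nabla\omega(z),x-z\rangle\}$, $\Omega_{\omega,X}=2\mathcal{D}^2_{\omega,X}/\sigma_\omega$. $\gamma_1(1)=1$, $\gamma_k(1)=(1-\alpha_k)\gamma_{k-1}(1)$; $\Gamma_k(1,\rho)=(\gamma_i(1)^{-1}\alpha_i^{1+\rho})_{i=1}^k$; $\ell_p$ norms, $\frac{2}{1-\rho}=\infty$ if $\rho=1$. Procedure $\mathcal{G}_{APL}(p,\mathrm{lb},\beta,\theta)$: Step 0: $x^u_0=p$, $\overline f_0=f(p)$, $\underline f_0=\mathrm{lb}$, $l=\beta\underline f_0+(1-\beta)\overline f_0$; $x_0\in X$ and initial localizer $X'_0$ (e.g. $x_0=p$, $X'_0=X$); $d_\omega(x)=\omega(x)-[\omega(x_0)+\langle\nabla\omega(x_0),x-x_0\rangle]$;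 $k=1$. Step 1: $x^l_k=(1-\alpha_k)x^u_{k-1}+\alpha_kx_{k-1}$, $\underline h_k=\min_{x\in X'_{k-1}}h(x^l_k,x)$ ($+\infty$ if empty), $\underline f_k=\max\{\underline f_{k-1},\min\{l,\underline h_k\}\}$; if $\underline f_k\ge l-\theta(l-\underline f_0)$ terminate with $p^+=x^u_{k-1}$, $\mathrm{lb}^+=\underline f_k$. Step 2: $x_k=\operatorname{argmin}_{x\in X'_{k-1}}\{d_\omega(x):h(x^l_k,x)\le l\}$. Step 3: $\overline f_k=\min\{\overline f_{k-1},f(\alpha_kx_k+(1-\alpha_k)x^u_{k-1})\}$, $x^u_k$ with $f(x^u_k)=\overline f_k$; if $\overline f_k\le l+\theta(\overline f_0-l)$ terminate with $p^+=x^u_k$, $\mathrm{lb}^+=\underline f_k$. Step 4: closed convex $X'_k$ with $\{x\in X'_{k-1}:h(x^l_k,x)\le l\}\subseteq X'_k\subseteq\{x\in X:\langle\nabla d_\omega(x_k),x-x_k\rangle\ge0\}$. Step 5: $k\leftarrow k+1$, go to Step 1. APL method (input $p_0\in X$, $\epsilon>0$, $\beta,\theta\in(0,1)$): Step 0: $p_1\in\operatorname{Argmin}_{x\in X}h(p_0,x)$, $\mathrm{lb}_1=h(p_0,p_1)$, $\mathrm{ub}_1=f(p_1)$, $s=1$. Step 1: if $\mathrm{ub}_s-\mathrm{lb}_s\le\epsilon$ terminate. Step 2: $(p_{s+1},\mathrm{lb}_{s+1})=\mathcal{G}_{APL}(p_s,\mathrm{lb}_s,\beta,\theta)$, $\mathrm{ub}_{s+1}=f(p_{s+1})$.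 Step 3: $s\leftarrow s+1$, go to Step 1. Each call of the procedure is a phase; iterations are those of the procedure calls. *)

From mathcomp Require Import all_boot all_order all_algebra.
From mathcomp Require Import all_classical all_reals all_analysis.
Set Implicit Arguments. Unset Strict Implicit. Unset Printing Implicit Defensive.
Import Order.TTheory GRing.Theory Num.Theory numFieldNormedType.Exports.
Local Open Scope ring_scope.
Local Open Scope classical_set_scope.

Section APL.
Context {R : realType} {n : nat}.
Local Notation V := 'rV[R]_n.

Definition dotp (u v : V) : R := \sum_(i < n) u 0 i * v 0 i.

Definition is_norm (nrm : V -> R) : Prop :=
  (forall x, nrm x = 0 -> x = 0) /\
  (forall (a : R) x, nrm (a *: x) = `|a| * nrm x) /\
  (forall x y, nrm (x + y) <= nrm x + nrm y).

Definition convex_on (A : set V) (F : V -> R) : Prop :=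
  forall x y (t : R), A x -> A y -> 0 <= t <= 1 ->
    F (t *: x + (1 - t) *: y) <= t * F x + (1 - t) * F y.

Definition strongly_convex_on (A : set V) (nrm : V -> R) (sigma : R)
  (F : V -> R) : Prop :=
  forall x y (t : R), A x -> A y -> 0 <= t <= 1 ->
    F (t *: x + (1 - t) *: y)
      <= t * F x + (1 - t) * F y - sigma / 2 * t * (1 - t) * (nrm (x - y)) ^+ 2.

Definition subgrad_oracle (A : set V) (f : V -> R) (g : V -> V) : Prop :=
  forall x y, A x -> A y -> f x + dotp (g x) (y - x) <= f y.

Definition holder_cond (A : set V) (f : V -> R) (g : V -> V) (nrm : V -> R)
  (M rho : R) : Prop :=
  forall x y, A x -> A y ->
    f y - f x - dotp (g x) (y - x) <= M / (1 + rho) * (nrm (y - x)) `^ (1 + rho).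

Definition bregman_term (omega : V -> R) (x z : V) : R :=
  omega x - omega z - 'd omega z (x - z).

Definition is_Dsq (A : set V) (omega : V -> R) (D2 : R) : Prop :=
  (exists x z, A x /\ A z /\ bregman_term omega x z = D2) /\
  (forall x z, A x -> A z -> bregman_term omega x z <= D2).

Definition Omega_wX (sigma D2 : R) : R := 2 * D2 / sigma.

Fixpoint gam (alpha : nat -> R) (k : nat) : R :=
  match k with
  | 0 => 1
  | k'.+1 => if k' is 0 then 1 else (1 - alpha k) * gam alpha k'
  end.

(* || Gamma_k(1,rho) ||_{2/(1-rho)}, with 2/(1-rho) = oo when rho = 1 *)
Definition Gamma_entry (alpha : nat -> R) (rho : R) (i : nat) : R :=
  (gam alpha i)^-1 * (alpha i) `^ (1 + rho).

Definition Gamma_norm (alpha : nat -> R) (rho : R) (k : nat) : R :=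
  if rho == 1 then \big[Num.max/0]_(1 <= i < k.+1) `|Gamma_entry alpha rho i|
  else (\sum_(1 <= i < k.+1) `|Gamma_entry alpha rho i| `^ (2 / (1 - rho)))
         `^ ((1 - rho) / 2).

Definition hlin (f : V -> R) (g : V -> V) (z x : V) : R := f z + dotp (g z) (x - z).

Definition localizer (A : set V) (f : V -> R) (l : R) (A' : set V) : Prop :=
  convex_set A' /\ compact A' /\ [set x | A x /\ f x <= l] `<=` A' /\ A' `<=` A.

(* value min{l, underline h} where underline h = min_{x in B} F x (+oo if B empty) *)
Definition min_level_val (B : set V) (F : V -> R) (l m : R) : Prop :=
  (B = set0 /\ m = l) \/
  (exists z, B z /\ (forall y, B y -> F z <= F y) /\ m = Num.min l (F z)).

(* trace of one call of the procedure G_APL *)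
Record ptrace := PTrace {
  xu : nat -> V;
  xx : nat -> V;
  xl : nat -> V;
  fu : nat -> R;
  fl : nat -> R;
  Xp : nat -> set V
}.

Section Procedure.
Variables (X : set V) (f : V -> R) (g : V -> V) (omega : V -> R)
  (alpha : nat -> R) (beta theta : R) (p : V) (lb : R) (t : ptrace).

Definition lev : R := beta * lb + (1 - beta) * f p.

Let h := hlin f g.

Definition d_om (x : V) : R :=
  omega x - (omega (xx t 0) + 'd omega (xx t 0) (x - xx t 0)).

Definition grad_d_om (y v : V) : R := 'd omega y v - 'd omega (xx t 0) v.

Definition G_init : Prop :=
  xu t 0 = p /\ fu t 0 = f p /\ fl t 0 = lb /\ X (xx t 0) /\
  localizer X f lev (Xp t 0).

Definition G_step1 (k : nat) : Prop :=
  xl t k = (1 - alpha k) *: xu t k.-1 + alpha k *: xx t k.-1 /\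
  exists m, min_level_val (Xp t k.-1) (h (xl t k)) lev m /\
            fl t k = Num.max (fl t k.-1) m.

Definition G_term1 (k : nat) : Prop := lev - theta * (lev - fl t 0) <= fl t k.

Definition G_step2 (k : nat) : Prop :=
  Xp t k.-1 (xx t k) /\ h (xl t k) (xx t k) <= lev /\
  forall y, Xp t k.-1 y -> h (xl t k) y <= lev -> d_om (xx t k) <= d_om y.

Definition G_step3 (k : nat) : Prop :=
  let xt := alpha k *: xx t k + (1 - alpha k) *: xu t k.-1 in
  fu t k = Num.min (fu t k.-1) (f xt) /\
  (xu t k = xu t k.-1 \/ xu t k = xt) /\ f (xu t k) = fu t k.

Definition G_term3 (k : nat) : Prop := fu t k <= lev + theta * (fu t 0 - lev).

Definition G_step4 (k : nat) : Prop :=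
  closed (Xp t k) /\ convex_set (Xp t k) /\
  [set x | Xp t k.-1 x /\ h (xl t k) x <= lev] `<=` Xp t k /\
  Xp t k `<=` [set x | X x /\ 0 <= grad_d_om (xx t k) (x - xx t k)].

Definition G_iter_cont (k : nat) : Prop :=
  G_step1 k /\ ~ G_term1 k /\ G_step2 k /\ G_step3 k /\ ~ G_term3 k /\ G_step4 k.

Definition G_iter_last (k : nat) : Prop :=
  G_step1 k /\
  (G_term1 k \/
   (~ G_term1 k /\ G_step2 k /\ G_step3 k /\
    (G_term3 k \/ (~ G_term3 k /\ G_step4 k)))).

(* a (possibly unfinished) run of G_APL(p, lb, beta, theta) in which
   iterations 1..K have been started *)
Definition G_prefix (K : nat) : Prop :=
  G_init /\ (forall k, (1 <= k < K)%N -> G_iter_cont k) /\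
  ((0 < K)%N -> G_iter_last K).

Definition G_done (K : nat) (p' : V) (lb' : R) : Prop :=
  G_init /\ (forall k, (1 <= k < K)%N -> G_iter_cont k) /\ (0 < K)%N /\
  G_step1 K /\
  ((G_term1 K /\ p' = xu t K.-1 /\ lb' = fl t K) \/
   (~ G_term1 K /\ G_step2 K /\ G_step3 K /\ G_term3 K /\
    p' = xu t K /\ lb' = fl t K)).

End Procedure.

(* A (possibly unfinished) run of the APL method in which S phases have been
   started: phases 1..S-1 have terminated, phase S has started K S iterations. *)
Definition APL_prefix (X : set V) (f : V -> R) (g : V -> V) (omega : V -> R)
  (alpha : nat -> R) (beta theta eps : R) (p0 : V)
  (p : nat -> V) (lb ub : nat -> R) (tr : nat -> ptrace) (K : nat -> nat)
  (S : nat) : Prop :=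
  X (p 1%N) /\ (forall y, X y -> hlin f g p0 (p 1%N) <= hlin f g p0 y) /\
  lb 1%N = hlin f g p0 (p 1%N) /\ ub 1%N = f (p 1%N) /\
  (forall s, (1 <= s <= S)%N -> eps < ub s - lb s) /\
  (forall s, (1 <= s < S)%N ->
     G_done X f g omega alpha beta theta (p s) (lb s) (tr s) (K s)
            (p s.+1) (lb s.+1) /\ ub s.+1 = f (p s.+1)) /\
  ((0 < S)%N -> G_prefix X f g omega alpha beta theta (p S) (lb S) (tr S) (K S)).

Definition q_APL (beta theta : R) : R := 1 - (1 - theta) * Num.min beta (1 - beta).

Definition Sbar (M rho Omega eps beta theta : R) : R :=
  (Num.ceil (Num.max 0
     (ln (M * Omega `^ ((1 + rho) / 2) / ((1 + rho) * eps))
      / ln ((q_APL beta theta)^-1))))%:~R.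

Definition iter_bound (M rho Omega eps beta theta c : R) : R :=
  Sbar M rho Omega eps beta theta +
  (1 - (q_APL beta theta) `^ (2 / (1 + 3 * rho)))^-1 *
  (c * M * Omega `^ ((1 + rho) / 2) / (beta * theta * (1 + rho) * eps))
    `^ (2 / (1 + 3 * rho)).

End APL.

From mathcomp Require Import all_boot all_order all_algebra.
From mathcomp Require Import all_classical all_reals all_analysis.
From mathcomp Require Import ring lra zify.
Import Order.TTheory GRing.Theory Num.Theory numFieldNormedType.Exports.
Set Implicit Arguments. Unset Strict Implicit.
Local Open Scope ring_scope.
Local Open Scope classical_set_scope.

(* Each phase of APL ends either at Step 1 or at Step 3, and either way the
   gap [ub - lb] shrinks by the factor [q]; the first gap is at most
   [M Omega^((1+rho)/2) / (1+rho)] by the Hoelder condition, so the number of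
   phases is at most [Sbar(eps)].  Inside a phase with level [l], the standard
   accelerated recursion for [f(x^u_k) - l], unrolled through [gamma_k] and
   combined with Hoelder's inequality and [sum_k |x_k - x_(k-1)|^2 <= Omega]
   (the prox-function [d_omega] increases along the [x_k]), gives
   [f(x^u_k) - l <= c M Omega^((1+rho)/2) / (1+rho) k^(-(1+3 rho)/2)].  Until
   the phase terminates this gap stays above [beta theta (ub - lb)], which
   bounds the length of each phase; summing over phases, whose gaps grow
   geometrically backwards from [eps], gives the iteration bound. *)

Section Vectors.
Context {R : realType} {n : nat}.
Local Notation V := 'rV[R]_n.

Lemma dotpD (u x y : V) : dotp u (x + y) = dotp u x + dotp u y.
Proof. by rewrite /dotp -big_split; apply: eq_bigr => i _; rewrite mxE mulrDr. Qed.

Lemma dotpZ (u x : V) a : dotp u (a *: x) = a * dotp u x.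
Proof. by rewrite /dotp mulr_sumr; apply: eq_bigr => i _; rewrite mxE mulrCA. Qed.

Lemma convex_set_comb (A : set V) x y t : convex_set A -> A x -> A y ->
  0 <= t <= 1 -> A (t *: x + (1 - t) *: y).
Proof.
move=> cA Ax Ay /andP[t0 t1].
by have := cA x y (Itv01 t0 t1); rewrite !inE; apply.
Qed.

Variable nrm : V -> R.
Hypothesis nrmP : is_norm nrm.

Lemma is_norm_ge0 x : 0 <= nrm x.
Proof.
case: nrmP => _ [nrmZ nrmD].
have nrm0 : nrm 0 = 0 by rewrite -(scale0r 0) nrmZ normr0 mul0r.
have := nrmD x (-x); rewrite subrr nrm0 -scaleN1r nrmZ normrN normr1 mul1r.
lra.
Qed.

Lemma is_normZ a x : 0 <= a -> nrm (a *: x) = a * nrm x.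
Proof. by case: nrmP => _ [nrmZ _] a0; rewrite nrmZ ger0_norm. Qed.

End Vectors.

Section FiniteHoelder.
Context {R : realType} {T : Type}.
Implicit Types (s : seq T) (a b : T -> R).

Lemma hoelder_sum s a b (p q : R) :
  (forall i, 0 <= a i) -> (forall i, 0 <= b i) -> 0 < p -> 0 < q -> p^-1 + q^-1 = 1 ->
  \sum_(i <- s) a i * b i <=
  (\sum_(i <- s) a i `^ p) `^ p^-1 * (\sum_(i <- s) b i `^ q) `^ q^-1.
Proof.
move=> a0 b0 p0 q0 pq; elim: s => [|x s IH].
  by rewrite big_nil mulr_ge0 ?powR_ge0.
rewrite !big_cons; set A := \sum_(i <- s) a i `^ p; set B := \sum_(i <- s) b i `^ q.
have A0 : 0 <= A by apply: sumr_ge0 => i _; exact: powR_ge0.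
have B0 : 0 <= B by apply: sumr_ge0 => i _; exact: powR_ge0.
apply: le_trans (lerD (lexx (a x * b x)) IH) _.
have := hoelder2 (a0 x) (powR_ge0 A p^-1) (b0 x) (powR_ge0 B q^-1) p0 q0 pq.
by rewrite -!powRrM !mulVf ?gt_eqF // !powRr1.
Qed.

Lemma sum_mul_le_bigmax s a b : (forall i, 0 <= b i) ->
  \sum_(i <- s) a i * b i <= (\big[Num.max/0]_(i <- s) `|a i|) * \sum_(i <- s) b i.
Proof.
move=> b0; elim: s => [|x s IH]; first by rewrite !big_nil mul0r.
rewrite !big_cons mulrDr; apply: lerD.
  apply: le_trans (ler_norm _) _; rewrite normrM (ger0_norm (b0 x)).
  by apply: ler_wpM2r => //; rewrite le_max lexx.
apply: le_trans IH _; apply: ler_wpM2r; first by apply: sumr_ge0.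
by rewrite le_max lexx orbT.
Qed.

End FiniteHoelder.

Section Bregman.
Context {R : realType} {n : nat}.
Local Notation V := 'rV[R]_n.
Variables (nrm : V -> R) (X : set V) (sigma : R) (omega : V -> R).
Hypothesis omega_sc : strongly_convex_on X nrm sigma omega.

Lemma strongly_convex_slope_le x z h : X x -> X z -> 0 < h < 1 ->
  h^-1 * (omega (h *: (x - z) + z) - omega z)
    <= omega x - omega z - sigma / 2 * (1 - h) * nrm (x - z) ^+ 2.
Proof.
move=> Xx Xz /andP[h0 h1].
have := @omega_sc x z h Xx Xz; rewrite (ltW h0) (ltW h1) => /(_ isT).
have -> : h *: x + (1 - h) *: z = h *: (x - z) + z.
  by rewrite scalerBr scalerBl scale1r [RHS]addrAC -addrA.
set N := nrm (x - z) ^+ 2; set w := omega _ => le_w.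
have -> : omega x - omega z - sigma / 2 * (1 - h) * N =
    h^-1 * (h * omega x + (1 - h) * omega z - sigma / 2 * h * (1 - h) * N - omega z).
  by field; rewrite gt_eqF.
by rewrite ler_wpM2l ?invr_ge0 ?(ltW h0) // lerB.
Qed.

(* The slopes above converge to ['d omega z (x - z)] as [h -> 0+], while the
   right-hand side tends to the Bregman term minus [sigma/2 |x - z|^2]. *)
Lemma bregman_term_ge x z : X x -> X z -> differentiable omega z ->
  sigma / 2 * nrm (x - z) ^+ 2 <= bregman_term omega x z.
Proof.
move=> Xx Xz dz; set v := x - z.
have slope_cvg : (fun h : R => h^-1 *: ((omega \o shift z) (h *: v) - omega z))
    @ 0^' --> 'd omega z v by rewrite -deriveE //; exact: diff_derivable.
pose psi h := h^-1 *: ((omega \o shift z) (h *: v) - omega z) - sigma / 2 * h * nrm v ^+ 2.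
have psi_cvg : psi @ 0^'+ --> 'd omega z v.
  have -> : 'd omega z v = 'd omega z v - sigma / 2 * 0 * nrm v ^+ 2.
    by rewrite mulr0 mul0r subr0.
  apply: cvgB.
    apply: cvg_trans; last exact: slope_cvg.
    by apply: cvg_app; apply: within_subset => u /= /gt_eqF ->.
  have h_cvg : (fun h : R => h) @ 0^'+ --> (0:R).
    by apply: cvg_at_right_filter; exact: cvg_id.
  exact: (@cvgMr_tmp _ _ _ _ (fun h => sigma / 2 * h) _ (nrm v ^+ 2)
    (@cvgMl_tmp _ _ _ _ id (sigma / 2) 0 h_cvg)).
rewrite /bregman_term -subr_ge0.
have -> : omega x - omega z - 'd omega z v - sigma / 2 * nrm v ^+ 2 =
   (omega x - omega z - sigma / 2 * nrm v ^+ 2) - 'd omega z v by ring.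
rewrite subr_ge0; apply: (cvgr_to_le psi_cvg); near=> h.
have h01 : 0 < h < 1 by apply/andP; split; near: h;
  [exact: nbhs_right_gt | exact: nbhs_right_lt].
have := strongly_convex_slope_le Xx Xz h01.
rewrite /psi /= -/v -[h^-1 *: _]/(h^-1 * _); lra.
Unshelve. all: end_near.
Qed.

End Bregman.

Section Omega.
Context {R : realType}.

Lemma le_Omega_wX (sigma D2 s : R) : 0 < sigma -> sigma / 2 * s <= D2 ->
  s <= Omega_wX sigma D2.
Proof. by move=> s0 le_s; rewrite /Omega_wX ler_pdivlMr //; lra. Qed.

Lemma powR_le_half (N Om e : R) : 0 <= N -> N ^+ 2 <= Om -> 0 <= e ->
  N `^ e <= Om `^ (e / 2).
Proof.
move=> N0 NOm e0.
have -> : N `^ e = (N ^+ 2) `^ (e / 2).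
  by rewrite -[2]/(2%:R) -powR_mulrn // -powRrM; congr (_ `^ _); field.
apply: ge0_ler_powR => //; rewrite ?nnegrE ?divr_ge0 ?sqr_ge0 //.
exact: le_trans (sqr_ge0 _) NOm.
Qed.

End Omega.

Section Problem.
Context {R : realType} {n : nat}.
Local Notation V := 'rV[R]_n.
Variables (nrm : V -> R) (X : set V) (f : V -> R) (g : V -> V) (M rho : R)
  (omega : V -> R) (sigma D2 : R).
Hypotheses (nrmP : is_norm nrm) (M_gt0 : 0 < M) (rho01 : 0 <= rho <= 1)
  (f_holder : holder_cond X f g nrm M rho)
  (omega_diff : forall x, X x -> differentiable omega x) (sigma_gt0 : 0 < sigma)
  (omega_sc : strongly_convex_on X nrm sigma omega) (D2P : is_Dsq X omega D2).

Lemma sqr_norm_le_Omega x z : X x -> X z -> nrm (x - z) ^+ 2 <= Omega_wX sigma D2.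
Proof.
move=> Xx Xz; apply: le_Omega_wX => //.
exact: le_trans (bregman_term_ge omega_sc Xx Xz (omega_diff Xz)) (D2P.2 _ _ Xx Xz).
Qed.

Lemma linearization_gap_le z x : X z -> X x ->
  f x - hlin f g z x <= M / (1 + rho) * Omega_wX sigma D2 `^ ((1 + rho) / 2).
Proof.
move=> Xz Xx; case/andP: rho01 => rho0 _; rewrite /hlin opprD addrA.
apply: le_trans (f_holder Xz Xx) _; apply: ler_wpM2l.
  by apply: divr_ge0; [exact: ltW | lra].
apply: powR_le_half; last by lra.
  exact: is_norm_ge0.
exact: sqr_norm_le_Omega.
Qed.

End Problem.

Section GammaNorm.
Context {R : realType}.
Variables (alpha : nat -> R) (rho : R) (N : nat -> R) (Om : R) (k : nat).
Hypotheses (rho01 : 0 <= rho <= 1) (N_ge0 : forall i, 0 <= N i)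
  (sumN2_le : \sum_(1 <= i < k.+1) N i ^+ 2 <= Om).

(* Hoelder's inequality with exponents [2/(1-rho)] and [2/(1+rho)]; for
   [rho = 1] the first exponent is infinite. *)
Lemma sum_Gamma_entry_le :
  \sum_(1 <= i < k.+1) Gamma_entry alpha rho i * N i `^ (1 + rho)
    <= Gamma_norm alpha rho k * Om `^ ((1 + rho) / 2).
Proof.
case/andP: rho01 => rho0 rho1.
have Np_ge0 i : 0 <= N i `^ (1 + rho) by exact: powR_ge0.
have N2E i : N i `^ 2 = N i ^+ 2 by rewrite -[2]/(2%:R) powR_mulrn.
have Om0 : 0 <= Om by apply: le_trans sumN2_le; apply: sumr_ge0 => i _; exact: sqr_ge0.
rewrite /Gamma_norm; case: eqP => [rhoE|/eqP rhoN1].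
  have -> : (1 + rho) / 2 = 1 :> R by rewrite rhoE; field.
  rewrite powRr1 //; apply: le_trans (sum_mul_le_bigmax _ _ Np_ge0) _.
  apply: ler_wpM2l; first exact: bigmax_ge_id.
  by apply: le_trans sumN2_le; rewrite rhoE le_eqVlt; apply/orP; left; apply/eqP;
    apply: eq_bigr => i _; rewrite -N2E.
have rho_lt1 : rho < 1 by rewrite lt_neqAle rhoN1.
have p0 : 0 < 2 / (1 - rho) by apply: divr_gt0 => //; lra.
have q0 : 0 < 2 / (1 + rho) by apply: divr_gt0 => //; lra.
have pq : (2 / (1 - rho))^-1 + (2 / (1 + rho))^-1 = 1 by rewrite !invf_div; field.
apply: le_trans (_ : \sum_(1 <= i < k.+1) `|Gamma_entry alpha rho i| * N i `^ (1 + rho)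
    <= _).
  by apply: ler_sum => i _; apply: ler_wpM2r => //; exact: ler_norm.
apply: le_trans (hoelder_sum _ (fun i => normr_ge0 _) Np_ge0 p0 q0 pq) _.
rewrite !invf_div; apply: ler_wpM2l; first exact: powR_ge0.
have -> : \sum_(1 <= i < k.+1) (N i `^ (1 + rho)) `^ (2 / (1 + rho))
    = \sum_(1 <= i < k.+1) N i ^+ 2.
  apply: eq_bigr => i _; rewrite -powRrM -N2E; congr (_ `^ _); field; lra.
apply: ge0_ler_powR => //; rewrite ?nnegrE ?divr_ge0 //; try lra.
by apply: sumr_ge0 => i _; exact: sqr_ge0.
Qed.

End GammaNorm.

Lemma lt_powR_inv {R : realType} (x B e : R) : 0 <= x -> 0 < e ->
  x `^ e < B -> x < B `^ e^-1.
Proof.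
move=> x0 e0 xB; have B0 : 0 <= B by apply: le_trans (powR_ge0 _ _) (ltW xB).
rewrite -[x in x < _](powRr1 x0) -(@mulfV _ e) ?gt_eqF // powRrM.
by apply: gt0_ltr_powR; rewrite ?invr_gt0 ?nnegrE ?powR_ge0.
Qed.

Section Phase.
Context {R : realType} {n : nat}.
Local Notation V := 'rV[R]_n.
Variables (nrm : V -> R) (X : set V) (f : V -> R) (g : V -> V) (M rho : R)
  (omega : V -> R) (sigma D2 : R) (alpha : nat -> R) (beta theta : R).
Variables (p : V) (lb : R) (t : @ptrace R n) (K : nat).
Hypotheses (X_convex : convex_set X) (alpha01 : forall k, (1 <= k)%N -> 0 < alpha k <= 1)
  (t_init : G_init X f beta p lb t)
  (t_cont : forall k, (1 <= k < K)%N -> G_iter_cont X f g omega alpha beta theta p lb t k)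
  (p_mem : X p).

Local Notation l := (lev f beta p lb).

Lemma step3_mem k : (1 <= k)%N -> X (xx t k) -> X (xu t k.-1) ->
  G_step3 f alpha t k -> X (xu t k).
Proof.
move=> k1 Xx Xu [_ [[->|->] _]] //.
by apply: convex_set_comb => //; case/andP: (alpha01 k1) => /ltW -> ->.
Qed.

Lemma phase_mem j : (j <= K.-1)%N -> [/\ X (xx t j), X (xu t j) & Xp t j `<=` X].
Proof.
elim: j => [_|j IH jK].
  by case: t_init => [-> [_ [_ [Xx0 [_ [_ [_ sub]]]]]]].
have [Xx Xu sub] := IH (ltnW jK).
have /t_cont[_ [_ [[/sub Xx1 _] [s3 [_ [_ [_ [_ sub1]]]]]]]] : (1 <= j.+1 < K)%N by lia.
split => //; first exact: step3_mem.
by move=> y /sub1[].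
Qed.

Lemma phase_levels j : (j <= K.-1)%N ->
  [/\ fu t j <= f p, f (xu t j) = fu t j & lb <= fl t j].
Proof.
elim: j => [_|j IH jK].
  by case: t_init => [-> [-> [-> _]]].
have [fu_le fxu lb_le] := IH (ltnW jK).
have /t_cont[[_ [m [_ ->]]] [_ [_ [[-> [_ ->]] _]]]] : (1 <= j.+1 < K)%N by lia.
by rewrite ge_min fu_le le_max lb_le.
Qed.

Section Rate.
Hypotheses (nrmP : is_norm nrm) (g_subgrad : subgrad_oracle X f g) (M_gt0 : 0 < M)
  (rho01 : 0 <= rho <= 1) (f_holder : holder_cond X f g nrm M rho)
  (omega_diff : forall x, X x -> differentiable omega x) (sigma_gt0 : 0 < sigma)
  (omega_sc : strongly_convex_on X nrm sigma omega) (D2P : is_Dsq X omega D2)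
  (alpha1 : alpha 1%N = 1) (gam_gt0 : forall k, (1 <= k)%N -> 0 < gam alpha k).

(* Both points of Step 3 are convex combinations around [xl t k]: the Hoelder
   bound at [xl t k] is split along [x_k] (where the level-[l] constraint of
   Step 2 applies) and [xu t k.-1] (where the subgradient inequality applies). *)
Lemma gap_step k : (1 <= k < K)%N ->
  f (xu t k) - l <= (1 - alpha k) * (f (xu t k.-1) - l) +
     M / (1 + rho) * (alpha k `^ (1 + rho) * nrm (xx t k - xx t k.-1) `^ (1 + rho)).
Proof.
move=> /andP[k1 kK].
have [Xx Xu _] : [/\ X (xx t k.-1), X (xu t k.-1) & Xp t k.-1 `<=` X].
  by apply: phase_mem; lia.
have [Xxk _ _] : [/\ X (xx t k), X (xu t k) & Xp t k `<=` X].
  by apply: phase_mem; lia.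
have [[xlE _] [_ [[_ [hl _]] [[fuE [_ fxu]] _]]]] := t_cont (introT andP (conj k1 kK)).
have /andP[a0 a1] := alpha01 k1.
set a := alpha k in xlE fuE a0 a1 *; set y := xl t k in xlE hl *.
set z := a *: xx t k + (1 - a) *: xu t k.-1 in fuE.
have Xy : X y by rewrite xlE addrC; apply: convex_set_comb => //; rewrite a1 ltW.
have Xz : X z by apply: convex_set_comb => //; rewrite a1 ltW.
have fu_le : f (xu t k) <= f z by rewrite fxu fuE ge_min lexx orbT.
have zy1 : z - y = a *: (xx t k - xx t k.-1).
  by rewrite /z xlE; apply/rowP => i; rewrite !mxE; ring.
have zy2 : z - y = a *: (xx t k - y) + (1 - a) *: (xu t k.-1 - y).
  by rewrite /z xlE; apply/rowP => i; rewrite !mxE; ring.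
have hold := f_holder Xy Xz.
rewrite [X in dotp _ X]zy2 dotpD !dotpZ zy1 (is_normZ nrmP _ (ltW a0)) powRM
  ?(ltW a0) ?(is_norm_ge0 nrmP) // in hold.
have sub := g_subgrad Xy Xu; rewrite /hlin in hl.
have la : a * (f y + dotp (g y) (xx t k - y)) <= a * l by rewrite ler_pM2l.
have lu : (1 - a) * (f y + dotp (g y) (xu t k.-1 - y)) <= (1 - a) * f (xu t k.-1).
  by apply: ler_wpM2l => //; lra.
lra.
Qed.

Lemma d_omB x y :
  d_om omega t x - d_om omega t y = omega x - omega y - 'd omega (xx t 0) (x - y).
Proof. by rewrite /d_om !linearB /=; ring. Qed.

(* Step 4 of iteration [k-1] places [X'_(k-1)], hence [x_k], in the half-space
   where [d_omega] grows from [x_(k-1)]; for [k = 1] the gradient of [d_omega]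
   at [x_0] vanishes. *)
Lemma d_om_step k : (1 <= k < K)%N ->
  sigma / 2 * nrm (xx t k - xx t k.-1) ^+ 2 <=
  d_om omega t (xx t k) - d_om omega t (xx t k.-1).
Proof.
move=> /andP[k1 kK].
have [Xx _ _] : [/\ X (xx t k.-1), X (xu t k.-1) & Xp t k.-1 `<=` X].
  by apply: phase_mem; lia.
have [Xxk _ _] : [/\ X (xx t k), X (xu t k) & Xp t k `<=` X].
  by apply: phase_mem; lia.
have breg := bregman_term_ge omega_sc Xxk Xx (omega_diff Xx).
have grad : 0 <= grad_d_om omega t (xx t k.-1) (xx t k - xx t k.-1).
  have [_ [_ [[x_k _] _]]] := t_cont (introT andP (conj k1 kK)).
  case: k k1 kK x_k {breg Xx Xxk} => [//|[|k]] _ kK x_k.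
    by rewrite /grad_d_om subrr.
  have /t_cont[_ [_ [_ [_ [_ [_ [_ [_ half]]]]]]]] : (1 <= k.+1 < K)%N by lia.
  by case: (half _ x_k).
rewrite d_omB; apply: le_trans breg _.
by rewrite /bregman_term lerD2l lerN2 -subr_ge0.
Qed.

Lemma sum_sqr_steps_le_d_om k : (k <= K.-1)%N ->
  sigma / 2 * \sum_(1 <= i < k.+1) nrm (xx t i - xx t i.-1) ^+ 2 <= d_om omega t (xx t k).
Proof.
elim: k => [_|k IH kK].
  by rewrite big_geq // mulr0 /d_om subrr linear0 addr0 subrr.
rewrite big_nat_recr //= mulrDr.
have IHk := IH (ltnW kK).
have /d_om_step /= step : (1 <= k.+1 < K)%N by lia.
lra.
Qed.

Lemma sum_sqr_steps_le_Omega k : (k <= K.-1)%N ->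
  \sum_(1 <= i < k.+1) nrm (xx t i - xx t i.-1) ^+ 2 <= Omega_wX sigma D2.
Proof.
move=> kK; apply: le_Omega_wX => //; apply: le_trans (sum_sqr_steps_le_d_om kK) _.
have [Xxk _ _] := phase_mem kK; have [Xx0 _ _] := phase_mem (leq0n K.-1).
by have := D2P.2 _ _ Xxk Xx0; rewrite /d_om /bregman_term opprD addrA.
Qed.

Lemma gap_le_weighted_steps k : (1 <= k < K)%N ->
  (f (xu t k) - l) / gam alpha k <=
  M / (1 + rho) * \sum_(1 <= i < k.+1)
     Gamma_entry alpha rho i * nrm (xx t i - xx t i.-1) `^ (1 + rho).
Proof.
elim: k => [//|k IH /andP[_ kK]].
have /gap_step /= step : (1 <= k.+1 < K)%N by lia.
case: k IH kK step => [|k] IH kK step.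
  by rewrite big_nat1 /Gamma_entry /= alpha1 subrr mul0r add0r invr1 !mulr1 mul1r in step *.
have IHk := IH (introT andP (conj isT (ltnW kK))).
rewrite big_nat_recr //= /Gamma_entry /= mulrDr.
have := gam_gt0 (isT : (0 < k.+2)%N); rewrite /=.
move: step IHk; set a := alpha k.+2; set G := gam alpha k.+1.
set F := f (xu t k.+2) - l; set F' := f (xu t k.+1) - l.
set c1 := M / (1 + rho); set AN := a `^ (1 + rho) * _ => step IHk G2.
have a1 : 1 - a != 0 by apply: contraTneq G2 => ->; rewrite mul0r ltxx.
apply: le_trans (_ : ((1 - a) * F' + c1 * AN) / ((1 - a) * G) <= _).
  by rewrite ler_pM2r ?invr_gt0.
rewrite mulrDl invfM mulrACA mulfV // mul1r mulrA.
apply: lerD => //; rewrite le_eqVlt; apply/orP; left; apply/eqP; rewrite /AN; ring.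
Qed.

Variable c : R.
Hypothesis gam_Gamma_le : forall k, (1 <= k)%N ->
  gam alpha k * Gamma_norm alpha rho k <= c * k%:R `^ (- ((1 + 3 * rho) / 2)).

Lemma gap_le_rate k : (1 <= k < K)%N ->
  f (xu t k) - l <= M / (1 + rho) * Omega_wX sigma D2 `^ ((1 + rho) / 2) *
     (c * k%:R `^ (- ((1 + 3 * rho) / 2))).
Proof.
move=> /andP[k1 kK]; case/andP: rho01 => rho0 _.
have G0 := gam_gt0 k1.
have := gap_le_weighted_steps (introT andP (conj k1 kK)).
rewrite ler_pdivrMr // => unrolled.
have weighted : \sum_(1 <= i < k.+1)
    Gamma_entry alpha rho i * nrm (xx t i - xx t i.-1) `^ (1 + rho)
    <= Gamma_norm alpha rho k * Omega_wX sigma D2 `^ ((1 + rho) / 2).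
  apply: sum_Gamma_entry_le => // [i|]; first exact: is_norm_ge0.
  by apply: sum_sqr_steps_le_Omega; lia.
have c1_ge0 : 0 <= M / (1 + rho) by apply: divr_ge0; [exact: ltW | lra].
have Om_ge0 : 0 <= Omega_wX sigma D2 `^ ((1 + rho) / 2) by exact: powR_ge0.
move: unrolled weighted (gam_Gamma_le k1).
set c1 := M / (1 + rho); set Om := Omega_wX _ _ `^ _; set S := \sum_(_ <= i < _) _.
set G := gam alpha k; set Gn := Gamma_norm _ _ _; set ck := c * _.
move=> unrolled weighted rate.
have h1 : c1 * S * G <= c1 * (Gn * Om) * G by rewrite ler_pM2r // ler_wpM2l.
have h2 : c1 * Om * (G * Gn) <= c1 * Om * ck by rewrite ler_wpM2l // mulr_ge0.
lra.
Qed.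

Lemma gap_gt_nonterm k : (1 <= k < K)%N ->
  theta * (beta * (f p - lb)) < f (xu t k) - l.
Proof.
move=> /t_cont[_ [_ [_ [[_ [_ ->]] [nt3 _]]]]].
case: t_init => [_ [fu0 _]]; move: nt3; rewrite /G_term3 fu0 /lev.
by move/negP; rewrite -ltNge; lra.
Qed.

(* The last completed iteration [k = K - 1] has not terminated, so its gap
   exceeds [theta beta (f p - lb)], while [gap_le_rate] bounds it by a
   multiple of [k^(-(1+3 rho)/2)]. *)
Lemma phase_length_le : 0 < f p - lb -> 0 < beta -> 0 < theta -> 0 < c ->
  K%:R <= 1 + (c * M * Omega_wX sigma D2 `^ ((1 + rho) / 2) /
               (beta * theta * (1 + rho) * (f p - lb))) `^ (2 / (1 + 3 * rho)).
Proof.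
move=> gap0 beta0 theta0 c0; case/andP: rho01 => rho0 rho1.
case: (leqP K 1) => [K1|K2].
  apply: le_trans (_ : 1 <= _); first by rewrite (_ : 1 = 1%:R :> R) // ler_nat.
  by rewrite lerDl powR_ge0.
have kK : (1 <= K.-1 < K)%N by lia.
rewrite -[K in K%:R](prednK (ltnW K2)) -natr1 addrC lerD2l.
set e := (1 + 3 * rho) / 2; have e0 : 0 < e by rewrite /e; lra.
rewrite -[2 / _]invf_div -/e; apply/ltW/lt_powR_inv => //.
have := lt_le_trans (gap_gt_nonterm kK) (gap_le_rate kK).
rewrite -/e powRN; set Om := Omega_wX sigma D2 `^ _; set y := K.-1%:R `^ e.
have y0 : 0 < y by apply: powR_gt0; rewrite ltr0n; case/andP: kK.
move=> lt_y; rewrite ltr_pdivlMr ?mulr_gt0 //; last lra.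
rewrite -(ltr_pM2r y0) (_ : _ * (c / y) * y = c * M * Om / (1 + rho)) in lt_y;
  last by field; rewrite gt_eqF //; lra.
by rewrite ltr_pdivlMr in lt_y; lra.
Qed.
End Rate.
End Phase.

Section PhaseEnd.
Context {R : realType} {n : nat}.
Local Notation V := 'rV[R]_n.
Variables (X : set V) (f : V -> R) (g : V -> V) (omega : V -> R)
  (alpha : nat -> R) (beta theta : R).
Hypotheses (X_convex : convex_set X) (alpha01 : forall k, (1 <= k)%N -> 0 < alpha k <= 1)
  (beta01 : 0 < beta < 1) (theta01 : 0 < theta < 1).

Lemma q_APL_gt0 : 0 < q_APL beta theta.
Proof.
case/andP: beta01 => b0 b1; case/andP: theta01 => t0 t1.
have : Num.min beta (1 - beta) <= beta by rewrite ge_min lexx.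
rewrite /q_APL; nra.
Qed.

Lemma q_APL_lt1 : q_APL beta theta < 1.
Proof.
case/andP: beta01 => b0 b1; case/andP: theta01 => t0 t1.
have : 0 < Num.min beta (1 - beta) by rewrite lt_min b0 subr_gt0.
rewrite /q_APL; nra.
Qed.

(* With [Delta = f p - lb] we have [f p - l = beta Delta] and
   [l - lb = (1 - beta) Delta]: termination at Step 1 leaves a gap of at most
   [(1 - (1 - theta)(1 - beta)) Delta], termination at Step 3 one of at most
   [(1 - (1 - theta) beta) Delta]. *)
Lemma phase_gap_contract p lb t K p' lb' :
  G_done X f g omega alpha beta theta p lb t K p' lb' -> X p -> 0 <= f p - lb ->
  X p' /\ f p' - lb' <= q_APL beta theta * (f p - lb).
Proof.
move=> [t_init [t_cont [K0 [step1 last]]]] p_mem gap0.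
have KK : (K.-1 <= K.-1)%N by [].
have [XxK XuK subK] := phase_mem X_convex alpha01 t_init t_cont p_mem KK.
have [fu_le fxu lb_le] := phase_levels t_init t_cont KK.
case: t_init => [_ [fu0 [fl0 _]]].
case/andP: beta01 => b0 b1; case/andP: theta01 => t0 t1.
have D0 : 0 <= (1 - theta) * (f p - lb) by apply: mulr_ge0 => //; lra.
have min_b : Num.min beta (1 - beta) * ((1 - theta) * (f p - lb))
    <= beta * ((1 - theta) * (f p - lb)) by rewrite ler_wpM2r // ge_min lexx.
have min_1b : Num.min beta (1 - beta) * ((1 - theta) * (f p - lb))
    <= (1 - beta) * ((1 - theta) * (f p - lb)) by rewrite ler_wpM2r // ge_min lexx orbT.
rewrite /q_APL; case: last => [[T1 [-> ->]] | [_ [[x_K _] [s3 [T3 [-> ->]]]]]].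
  split => //; move: T1; rewrite /G_term1 /lev fl0 fxu; lra.
have flK : fl t K.-1 <= fl t K by case: step1 => _ [m [_ ->]]; rewrite le_max lexx.
have [_ [_ fxuK]] := s3.
split; first exact: (step3_mem X_convex alpha01 K0 (subK _ x_K) XuK s3).
move: T3; rewrite /G_term3 /lev fu0 -fxuK; lra.
Qed.

End PhaseEnd.

Lemma sum_geometric_le {R : realType} (r : R) (S : nat) : 0 <= r < 1 ->
  \sum_(1 <= s < S.+1) r ^+ (S - s) <= (1 - r)^-1.
Proof.
move=> /andP[r0 r1]; have r1' : 0 < 1 - r by lra.
elim: S => [|S IH]; first by rewrite big_geq // invr_ge0 ltW.
rewrite big_nat_recr //= subnn expr0.
have -> : \sum_(1 <= s < S.+1) r ^+ (S.+1 - s) = r * \sum_(1 <= s < S.+1) r ^+ (S - s).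
  by rewrite mulr_sumr; apply: eq_big_nat => s /andP[_ sS]; rewrite subSn // exprS.
have -> : (1 - r)^-1 = r * (1 - r)^-1 + 1 by field; rewrite gt_eqF.
by rewrite lerD2r ler_wpM2l.
Qed.

Section GeometricGaps.
Context {R : realType}.
Variables (Delta : nat -> R) (q eps : R) (S : nat).
Hypotheses (q01 : 0 < q < 1) (eps_gt0 : 0 < eps)
  (Delta_gt : forall s, (1 <= s <= S)%N -> eps < Delta s)
  (Delta_contract : forall s, (1 <= s < S)%N -> Delta s.+1 <= q * Delta s).

Lemma Delta_geometric s j : (1 <= s)%N -> (s + j <= S)%N ->
  Delta (s + j)%N <= q ^+ j * Delta s.
Proof.
case/andP: q01 => q0 _; move=> s1; elim: j => [|j IH] sj.
  by rewrite addn0 expr0 mul1r.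
rewrite addnS; apply: le_trans (Delta_contract _) _; first lia.
rewrite exprS -mulrA; apply: ler_wpM2l; [exact: ltW | apply: IH; lia].
Qed.

Lemma eps_lt_qpow_Delta s : (1 <= s <= S)%N -> eps < q ^+ (S - s) * Delta s.
Proof.
move=> /andP[s1 sS]; apply: lt_le_trans (@Delta_gt S _) _; first lia.
by have := Delta_geometric s1 (_ : (s + (S - s) <= S)%N); rewrite subnKC //; apply.
Qed.

Lemma phases_le_ceil_log G0 : ((1 <= S)%N -> Delta 1%N <= G0) ->
  (S%:R : R) <= (Num.ceil (Num.max 0 (ln (G0 / eps) / ln q^-1)))%:~R.
Proof.
move=> Delta1_le; case/andP: q01 => q0 q1.
have [->|S0] := posnP S.
  by rewrite ler0z ceil_ge0 (lt_le_trans (ltrN10 R)) // le_max lexx.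
have qS : 0 < q ^+ S.-1 by exact: exprn_gt0.
have epsD1 : eps < q ^+ S.-1 * Delta 1%N by rewrite -subn1; apply: eps_lt_qpow_Delta; lia.
have epsG0 : eps < q ^+ S.-1 * G0.
  by apply: lt_le_trans epsD1 _; rewrite ler_pM2l // Delta1_le.
have G0p : 0 < G0 by move: (lt_trans eps_gt0 epsG0); rewrite pmulr_rgt0.
have lq : 0 < ln q^-1 by apply: ln_gt0; rewrite invf_gt1.
set L := ln (G0 / eps) / ln q^-1.
have SL : S.-1%:R < L.
  rewrite /L ltr_pdivlMr // lnV ?posrE // ln_div ?posrE //.
  move: epsG0; rewrite -(ltr_ln (eps_gt0 : eps \in Num.pos)) ?posrE ?mulr_gt0 //.
  by rewrite lnM ?posrE // lnXn // -mulr_natl; lra.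
have : (S.-1%:Z < Num.ceil (Num.max 0 L))%R by rewrite ceil_gt_int lt_max SL orbT.
rewrite -lezD1 -[S in S%:R](prednK S0) -natr1 => le_ceil.
by rewrite (_ : S.-1%:R + 1 = ((S.-1%:Z + 1)%:~R : R)) ?ler_int // intrD.
Qed.

Lemma sum_lengths_le (Kn : nat -> nat) (C a : R) : 0 < a -> 0 <= C ->
  (forall s, (1 <= s <= S)%N -> (Kn s)%:R <= 1 + (C / Delta s) `^ a) ->
  \sum_(1 <= s < S.+1) ((Kn s)%:R : R) <= S%:R + (1 - q `^ a)^-1 * (C / eps) `^ a.
Proof.
move=> a0 C0 Kn_le; case/andP: q01 => q0 q1.
set r := q `^ a; set B := (C / eps) `^ a.
have r01 : 0 <= r < 1.
  have := gt0_ltr_powR a0 (ltW q0 : q \in Num.nneg) (ler01 : 1 \in Num.nneg) q1.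
  by rewrite powR1 powR_ge0.
have Kn_le_geom s : (1 <= s <= S)%N -> (Kn s)%:R <= 1 + B * r ^+ (S - s).
  move=> sS; apply: le_trans (Kn_le _ sS) _; rewrite lerD2l.
  have Ds : 0 < Delta s by apply: lt_trans eps_gt0 (Delta_gt sS).
  have qj : 0 < q ^+ (S - s) by exact: exprn_gt0.
  have CD : C / Delta s <= C / eps * q ^+ (S - s).
    rewrite ler_pdivrMr // -!mulrA -[X in X <= _](mulr1 C); apply: ler_wpM2l => //.
    by rewrite mulrC ler_pdivlMr // mul1r ltW // eps_lt_qpow_Delta.
  apply: le_trans (ge0_ler_powR (ltW a0) _ _ CD) _.
  - by rewrite nnegrE; apply: divr_ge0 => //; exact: ltW.
  - by rewrite nnegrE; apply: mulr_ge0; [apply: divr_ge0 => //; exact: ltW | exact: ltW].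
  have Ceps : 0 <= C / eps by rewrite divr_ge0 // ltW.
  rewrite powRM ?(ltW qj) // -/B -powR_mulrn ?(ltW q0) // powRAC powR_mulrn //.
  exact: powR_ge0.
apply: le_trans (_ : \sum_(1 <= s < S.+1) (1 + B * r ^+ (S - s)) <= _).
  by apply: ler_sum_nat => s /Kn_le_geom.
rewrite big_split /= sumr_const_nat subn1 /= -mulr_sumr lerD2l mulrC.
by apply: ler_wpM2r; [exact: powR_ge0 | exact: sum_geometric_le].
Qed.

End GeometricGaps.

Lemma G_done_prefix {R : realType} {n : nat} (X : set 'rV[R]_n) f g omega alpha
    beta theta p lb t K p' lb' :
  G_done X f g omega alpha beta theta p lb t K p' lb' ->
  G_prefix X f g omega alpha beta theta p lb t K.
Proof.
move=> [t_init [t_cont [_ [step1 [[T1 _]|[nT1 [s2 [s3 [T3 _]]]]]]]]].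
  by split=> //; split=> // _; split=> //; left.
by split=> //; split=> // _; split=> //; right; do !split=> //; left.
Qed.

Section APLRun.
Context {R : realType} {n : nat}.
Local Notation V := 'rV[R]_n.
Variables (X : set V) (f : V -> R) (g : V -> V) (omega : V -> R)
  (alpha : nat -> R) (beta theta eps : R) (p0 : V)
  (p : nat -> V) (lb ub : nat -> R) (tr : nat -> @ptrace R n) (K : nat -> nat) (S : nat).
Hypotheses (X_convex : convex_set X) (alpha01 : forall k, (1 <= k)%N -> 0 < alpha k <= 1)
  (beta01 : 0 < beta < 1) (theta01 : 0 < theta < 1) (eps_gt0 : 0 < eps)
  (run : APL_prefix X f g omega alpha beta theta eps p0 p lb ub tr K S).

Lemma apl_phase_mem s : (1 <= s <= S)%N -> X (p s) /\ ub s = f (p s).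
Proof.
case: run => [p1_mem [_ [_ [ub1 [gap_gt [phase_done _]]]]]].
elim: s => [//|[_ _|s IH /andP[_ sS]]]; first by [].
have [ps_mem ubs] := IH (ltnW sS).
have [done_s ub_s1] := phase_done s.+1 sS.
split=> //; apply: (proj1 (phase_gap_contract X_convex alpha01 beta01 theta01 done_s ps_mem _)).
by rewrite -ubs; apply: ltW (lt_trans eps_gt0 (gap_gt _ _)); lia.
Qed.

Lemma apl_gap_contract s : (1 <= s < S)%N ->
  ub s.+1 - lb s.+1 <= q_APL beta theta * (ub s - lb s).
Proof.
move=> sS; case: run => [_ [_ [_ [_ [gap_gt [phase_done _]]]]]].
have [ps_mem ubs] : X (p s) /\ ub s = f (p s) by apply: apl_phase_mem; lia.
have [done_s ub_s1] := phase_done s sS.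
have gap_ge0 : 0 <= f (p s) - lb s.
  by rewrite -ubs; apply: ltW (lt_trans eps_gt0 (gap_gt _ _)); lia.
rewrite ubs ub_s1.
exact: (proj2 (phase_gap_contract X_convex alpha01 beta01 theta01 done_s ps_mem gap_ge0)).
Qed.

Section Rates.
Variables (nrm : V -> R) (M rho : R) (sigma D2 c : R).
Hypotheses (nrmP : is_norm nrm) (g_subgrad : subgrad_oracle X f g) (M_gt0 : 0 < M)
  (rho01 : 0 <= rho <= 1) (f_holder : holder_cond X f g nrm M rho)
  (omega_diff : forall x, X x -> differentiable omega x) (sigma_gt0 : 0 < sigma)
  (omega_sc : strongly_convex_on X nrm sigma omega) (D2P : is_Dsq X omega D2)
  (alpha1 : alpha 1%N = 1) (c_gt0 : 0 < c)
  (gam_Gamma : forall k, (1 <= k)%N -> 0 < gam alpha k /\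
     gam alpha k * Gamma_norm alpha rho k <= c * k%:R `^ (- ((1 + 3 * rho) / 2)))
  (p0_mem : X p0).

Lemma apl_first_gap_le :
  ub 1%N - lb 1%N <= M / (1 + rho) * Omega_wX sigma D2 `^ ((1 + rho) / 2).
Proof.
case: run => [p1_mem [_ [-> [-> _]]]].
exact: (linearization_gap_le nrmP M_gt0 rho01 f_holder omega_diff sigma_gt0 omega_sc
  D2P p0_mem p1_mem).
Qed.

Lemma apl_phase_length_le s : (1 <= s <= S)%N ->
  (K s)%:R <= 1 + (c * M * Omega_wX sigma D2 `^ ((1 + rho) / 2) /
    (beta * theta * (1 + rho)) / (ub s - lb s)) `^ (2 / (1 + 3 * rho)).
Proof.
move=> sS; have [ps_mem ubs] := apl_phase_mem sS.
case: run => [_ [_ [_ [_ [gap_gt [phase_done last]]]]]].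
have [t_init [t_cont _]] : G_prefix X f g omega alpha beta theta (p s) (lb s) (tr s) (K s).
  case/andP: sS => s1; rewrite leq_eqVlt => /orP[/eqP sE|sS].
    by rewrite sE; apply: last; lia.
  by have [/G_done_prefix] := phase_done s (introT andP (conj s1 sS)).
have gap_gt0 : 0 < f (p s) - lb s by rewrite -ubs; apply: lt_trans eps_gt0 (gap_gt _ sS).
case/andP: beta01 => beta0 _; case/andP: theta01 => theta0 _; case/andP: rho01 => rho0 _.
have := phase_length_le X_convex alpha01 t_init t_cont ps_mem nrmP g_subgrad M_gt0
  rho01 f_holder omega_diff sigma_gt0 omega_sc D2P alpha1 (fun k k1 => (gam_Gamma k1).1)
  (fun k k1 => (gam_Gamma k1).2) gap_gt0 beta0 theta0 c_gt0.
by rewrite ubs invfM mulrA.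
Qed.

End Rates.
End APLRun.

Theorem theorem3p5 (R : realType) (n : nat)
  (nrm : 'rV[R]_n -> R) (X : set 'rV[R]_n)
  (f : 'rV[R]_n -> R) (g : 'rV[R]_n -> 'rV[R]_n) (M rho : R)
  (omega : 'rV[R]_n -> R) (sigma D2 : R)
  (alpha : nat -> R) (c eps beta theta : R) (p0 : 'rV[R]_n) :
  is_norm nrm ->
  X !=set0 -> convex_set X -> compact X ->
  convex_on X f -> subgrad_oracle X f g ->
  0 < M -> 0 <= rho <= 1 -> holder_cond X f g nrm M rho ->
  (forall x, X x -> differentiable omega x) ->
  0 < sigma -> strongly_convex_on X nrm sigma omega ->
  is_Dsq X omega D2 ->
  (forall k, (1 <= k)%N -> 0 < alpha k <= 1) -> alpha 1%N = 1 ->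
  0 < c ->
  (forall k, (1 <= k)%N ->
     0 < gam alpha k /\
     gam alpha k * Gamma_norm alpha rho k <= c * k%:R `^ (- ((1 + 3 * rho) / 2))) ->
  0 < eps -> 0 < beta < 1 -> 0 < theta < 1 ->
  X p0 ->
  forall (p : nat -> 'rV[R]_n) (lb ub : nat -> R) (tr : nat -> ptrace)
         (K : nat -> nat) (S : nat),
  APL_prefix X f g omega alpha beta theta eps p0 p lb ub tr K S ->
  S%:R <= Sbar M rho (Omega_wX sigma D2) eps beta theta /\
  (\sum_(1 <= s < S.+1) K s)%:R
    <= iter_bound M rho (Omega_wX sigma D2) eps beta theta c.
Proof.
move=> nrmP _ X_convex _ _ g_subgrad M_gt0 rho01 f_holder omega_diff sigma_gt0 omega_sc
  D2P alpha01 alpha1 c_gt0 gam_Gamma eps_gt0 beta01 theta01 p0_mem p lb ub tr K S run.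
have q01 : 0 < q_APL beta theta < 1 by rewrite q_APL_gt0 ?q_APL_lt1.
have gap_gt : forall s, (1 <= s <= S)%N -> eps < ub s - lb s.
  by case: run => [_ [_ [_ [_ []]]]].
have contract := apl_gap_contract X_convex alpha01 beta01 theta01 eps_gt0 run.
have Om_ge0 : 0 <= Omega_wX sigma D2 `^ ((1 + rho) / 2) by exact: powR_ge0.
case/andP: (rho01) => rho0 _; case/andP: (beta01) => beta0 _.
case/andP: (theta01) => theta0 _.
have phases : S%:R <= Sbar M rho (Omega_wX sigma D2) eps beta theta.
  rewrite /Sbar -mulf_div mulrA.
  apply: (@phases_le_ceil_log _ (fun s => ub s - lb s) _ _ _ q01 eps_gt0 gap_gt contract) => _.
  exact: (apl_first_gap_le run nrmP M_gt0 rho01 f_holder omega_diff sigma_gt0 omega_sc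
    D2P p0_mem).
split=> //; rewrite natr_sum /iter_bound.
apply: le_trans (lerD phases (lexx _)).
rewrite invfM mulrA.
apply: (@sum_lengths_le _ (fun s => ub s - lb s) _ _ _ q01 eps_gt0 gap_gt contract).
- by apply: divr_gt0; lra.
- by rewrite divr_ge0 ?mulr_ge0 // ?ltW //; lra.
move=> s sS; exact: (apl_phase_length_le X_convex alpha01 beta01 theta01 eps_gt0 run nrmP
  g_subgrad M_gt0 rho01 f_holder omega_diff sigma_gt0 omega_sc D2P alpha1 c_gt0 gam_Gamma sS).
Qed.
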